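(* Let $P(s,h)=\{p_1,\dots,p_m\}$ and $P(h,t)=\{p'_1,\dots,p'_n\}$ be skyline path sets with $p_i=(w_i,c_i)$, $p'_j=(w'_j,c'_j)$, each sorted in weight-increasing order, and let $p_i^j=(w_i+w'_j,c_i+c'_j)$. Fix $i,j$ and let $P_1=\{p_k^l: k<i,\ l<j\}$ and $P_2=\{p_k^l: k>i,\ l>j\}$. Then no path in $P_1\cup P_2$ dominates $p_i^j$.
   Context: A path with value $(w,c)$ dominates a path with value $(w',c')$ if $w\le w'$, $c\le c'$, and at least one inequality is strict. A skyline path set is a set of paths no one of which dominates another (so, in two dimensions, when sorted by increasing weight the costs are non-increasing). Concatenation adds weights and costs. *)

From HB Require Import structures.
From mathcomp Require Import all_boot all_order all_algebra.
Set Implicit Arguments. Unset Strict Implicit. Unset Printing Implicit Defensive.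
Import Order.TTheory GRing.Theory Num.Theory.
Local Open Scope ring_scope.

Definition dominates (R : realDomainType) (p q : R * R) : Prop :=
  p.1 <= q.1 /\ p.2 <= q.2 /\ (p.1 < q.1 \/ p.2 < q.2).

Definition skyline (R : realDomainType) (m : nat) (p : 'I_m -> R * R) : Prop :=
  forall k l : 'I_m, ~ dominates (p k) (p l).

Definition weight_sorted (R : realDomainType) (m : nat) (p : 'I_m -> R * R) : Prop :=
  forall k l : 'I_m, (k <= l)%N -> (p k).1 <= (p l).1.

Definition concat (R : realDomainType) (p q : R * R) : R * R :=
  (p.1 + q.1, p.2 + q.2).

From mathcomp Require Import all_boot all_order all_algebra.
From mathcomp Require Import lra.
Import Order.TTheory GRing.Theory Num.Theory.
Local Open Scope ring_scope.

(* In a skyline the cost is antitone in the weight, so p_k^l lies weakly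
   north-west (k < i, l < j) or south-east (k > i, l > j) of p_i^j.  In the
   north-west case p_k^l can only dominate p_i^j with equal costs, and then
   already p_k dominates p_i or p'_l dominates p'_j.  The south-east case is
   the same argument with weight and cost exchanged. *)

Section Skyline.
Variable R : realDomainType.
Implicit Types p q a b c d : R * R.

Definition swap_wc p : R * R := (p.2, p.1).

Lemma dominates_swap p q : dominates (swap_wc p) (swap_wc q) <-> dominates p q.
Proof. by rewrite /dominates /=; split=> -[? [? [?|?]]]; do 2!split=> //; tauto. Qed.

Lemma concat_swap p q : concat (swap_wc p) (swap_wc q) = swap_wc (concat p q).
Proof. by []. Qed.

Lemma skyline_cost_antitone m (P : 'I_m -> R * R) (k l : 'I_m) :
  skyline P -> (P k).1 <= (P l).1 -> (P l).2 <= (P k).2.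
Proof.
move=> hP le_w; rewrite leNgt; apply/negP => lt_c.
by apply: (hP k l); split; last split; [| exact: ltW | right].
Qed.

Lemma concat_not_dominates_nw a b c d :
  a.1 <= c.1 -> c.2 <= a.2 -> b.1 <= d.1 -> d.2 <= b.2 ->
  ~ dominates a c -> ~ dominates b d -> ~ dominates (concat a b) (concat c d).
Proof.
rewrite /dominates /concat /= => le_ac1 le_ca2 le_bd1 le_db2 ndom_ac ndom_bd.
move=> [_ [le_cost lt_sum]].
have [eq_ac2 eq_bd2] : a.2 = c.2 /\ b.2 = d.2 by split; apply/eqP; rewrite eq_le; lra.
have [lt_ac1 | lt_bd1] : a.1 < c.1 \/ b.1 < d.1 by lra.
- by apply: ndom_ac; rewrite eq_ac2; do 2!split=> //; left.
- by apply: ndom_bd; rewrite eq_bd2; do 2!split=> //; left.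
Qed.

Lemma concat_not_dominates_se a b c d :
  c.1 <= a.1 -> a.2 <= c.2 -> d.1 <= b.1 -> b.2 <= d.2 ->
  ~ dominates a c -> ~ dominates b d -> ~ dominates (concat a b) (concat c d).
Proof.
move=> le_ca1 le_ac2 le_db1 le_bd2 ndom_ac ndom_bd.
rewrite -dominates_swap -!concat_swap.
by apply: concat_not_dominates_nw; rewrite ?dominates_swap.
Qed.

End Skyline.

Theorem mainTheorem3 (R : realDomainType) (m n : nat)
  (P : 'I_m -> R * R) (P' : 'I_n -> R * R)
  (hP : skyline P) (hPs : weight_sorted P)
  (hP' : skyline P') (hP's : weight_sorted P')
  (i : 'I_m) (j : 'I_n) :
  forall (k : 'I_m) (l : 'I_n),
    ((k < i)%N /\ (l < j)%N) \/ ((i < k)%N /\ (j < l)%N) ->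
    ~ dominates (concat (P k) (P' l)) (concat (P i) (P' j)).
Proof.
move=> k l [[lt_ki lt_lj] | [lt_ik lt_jl]].
- have le_w : (P k).1 <= (P i).1 by apply/hPs/ltnW.
  have le_w' : (P' l).1 <= (P' j).1 by apply/hP's/ltnW.
  apply: concat_not_dominates_nw => //; exact: skyline_cost_antitone.
- have le_w : (P i).1 <= (P k).1 by apply/hPs/ltnW.
  have le_w' : (P' j).1 <= (P' l).1 by apply/hP's/ltnW.
  apply: concat_not_dominates_se => //; exact: skyline_cost_antitone.
Qed.
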